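(* If a Turing degree $\mathbf d$ is loquaciously high for paths, then every $\Pi^1_1$ subset of $\omega$ is c.e. relative to $\mathbf d$, uniformly (given a $\Pi^1_1$ index for the set, one effectively obtains an index of a $\mathbf d$-c.e. enumeration of it).
   Context: Fix a standard effective listing $(T_e:e\in\omega)$ of all computable subtrees of $\omega^{<\omega}$. A degree $\mathbf d$ is loquaciously high for paths if there are $D\in\mathbf d$ and a Turing functional $\Phi$ such that $\Phi^D(e,n)$ converges for all $e,n$, and whenever $T_e$ is ill-founded (has an infinite path), the function $n\mapsto\Phi^D(e,n)$ is an infinite path through $T_e$. *)

From Stdlib Require Import Arith List.
Import ListNotations.

Fixpoint tri (n : nat) : nat := match n with 0 => 0 | S k => S k + tri k end.
Definition pair (x y : nat) : nat := tri (x + y) + y.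

(* Multi-argument functions are handled via the pairing function. *)
Inductive code : Type :=
  | cZero
  | cSucc
  | cId
  | cFst
  | cSnd
  | cOracle
  | cPair (f g : code)
  | cComp (f g : code)
  | cPrec (f g : code)         (* h <x,0> = f x ; h <x,y+1> = g <x,<y,h<x,y>>> *)
  | cMu (f : code).

Inductive eval (O : nat -> nat) : code -> nat -> nat -> Prop :=
  | evZero x : eval O cZero x 0
  | evSucc x : eval O cSucc x (S x)
  | evId x : eval O cId x x
  | evFst a b : eval O cFst (pair a b) a
  | evSnd a b : eval O cSnd (pair a b) b
  | evOracle x : eval O cOracle x (O x)
  | evPair f g x a b : eval O f x a -> eval O g x b -> eval O (cPair f g) x (pair a b)
  | evComp f g x y z : eval O g x y -> eval O f y z -> eval O (cComp f g) x z
  | evPrec0 f g x v : eval O f x v -> eval O (cPrec f g) (pair x 0) v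
  | evPrecS f g x y u v :
      eval O (cPrec f g) (pair x y) u -> eval O g (pair x (pair y u)) v ->
      eval O (cPrec f g) (pair x (S y)) v
  | evMu f x y :
      eval O f (pair x y) 0 ->
      (forall z, z < y -> exists w, eval O f (pair x z) (S w)) ->
      eval O (cMu f) x y.

Fixpoint encode (c : code) : nat :=
  match c with
  | cZero => pair 0 0
  | cSucc => pair 1 0
  | cId => pair 2 0
  | cFst => pair 3 0
  | cSnd => pair 4 0
  | cOracle => pair 5 0
  | cPair f g => pair 6 (pair (encode f) (encode g))
  | cComp f g => pair 7 (pair (encode f) (encode g))
  | cPrec f g => pair 8 (pair (encode f) (encode g))
  | cMu f => pair 9 (encode f)
  end.

(* Phi O e x v : the e-th oracle machine (Turing functional) with oracle O on
   input x halts with output v.  Numbers that encode no code denote the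
   everywhere-divergent functional. *)
Definition Phi (O : nat -> nat) (e x v : nat) : Prop :=
  exists c, encode c = e /\ eval O c x v.

Definition phi (e x v : nat) : Prop := Phi (fun _ => 0) e x v.

Definition chi (D : nat -> bool) : nat -> nat := fun n => if D n then 1 else 0.

Fixpoint code_seq (s : list nat) : nat :=
  match s with [] => 0 | a :: t => S (pair a (code_seq t)) end.

Definition restr (f : nat -> nat) (n : nat) : list nat := map f (seq 0 n).

Definition is_tree (T : list nat -> Prop) : Prop :=
  forall s t, T (s ++ t) -> T s.

Definition is_path (f : nat -> nat) (T : list nat -> Prop) : Prop :=
  forall n, T (restr f n).

Definition ill_founded (T : list nat -> Prop) : Prop := exists f, is_path f T.

(* The standard listing of computable trees: T_e = T when the e-th partial
   computable function is total and is the characteristic function of the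
   tree T (via the coding code_seq of strings). *)
Definition tree_index (e : nat) (T : list nat -> Prop) : Prop :=
  is_tree T /\
  forall s, (T s -> phi e (code_seq s) 1) /\ (~ T s -> phi e (code_seq s) 0).

(* Phi^D(e,n) is the functional with index i applied to <e,n>. *)
Definition loquacious_for_paths (D : nat -> bool) : Prop :=
  exists i : nat,
    (forall e n, exists v, Phi (chi D) i (pair e n) v) /\
    (forall e T, tree_index e T -> ill_founded T ->
       exists g : nat -> nat,
         (forall n, Phi (chi D) i (pair e n) (g n)) /\ is_path g T).

Definition Pi11 (e n : nat) : Prop := forall f : nat -> nat, exists v, Phi f e n v.

Definition W (D : nat -> bool) (k n : nat) : Prop := exists v, Phi (chi D) k n v.

From Stdlib Require Import Arith Lia List Bool IndefiniteDescription Classical.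
Import ListNotations.

(* A Pi^1_1 index [e] and an input [n] determine a computable tree T(e, n) of finite oracle
   strings: those [s] for which no certificate below [s] proves, from the oracle values listed
   in [s], that machine [e] halts on [n].  Certificates are sound and complete, so the infinite
   paths through T(e, n) are exactly the oracles on which [e] diverges at [n], and [n] lies in
   the Pi^1_1 set iff T(e, n) is well founded.  A loquacious degree [D] computes, uniformly in
   the tree index, a sequence that is a path through T(e, n) whenever one exists; hence T(e, n)
   is well founded iff some finite prefix of that sequence leaves the tree, and searching for
   such a prefix is a D-computable enumeration, uniform in [e]. *)

Lemma tri_le a b : a <= b -> tri a <= tri b.
Proof. induction 1; simpl; lia. Qed.

Lemma pair_inj a b c d : pair a b = pair c d -> a = c /\ b = d.
Proof.
  unfold pair; intros H.
  assert (Hsum : a + b = c + d).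
  { destruct (lt_eq_lt_dec (a + b) (c + d)) as [[Hlt|Heq]|Hlt]; auto.
    - pose proof (tri_le (S (a + b)) (c + d) Hlt); simpl in *; lia.
    - pose proof (tri_le (S (c + d)) (a + b) Hlt); simpl in *; lia. }
  rewrite Hsum in H; lia.
Qed.

Lemma pair_mono_r a y y' : y <= y' -> pair a y <= pair a y'.
Proof. unfold pair; intros H; pose proof (tri_le (a + y) (a + y')); lia. Qed.

Lemma pair_ge_r a b : b <= pair a b.
Proof. unfold pair; lia. Qed.

Lemma pair_0_0 : pair 0 0 = 0.
Proof. reflexivity. Qed.

Fixpoint unpair (z : nat) : nat * nat :=
  match z with
  | 0 => (0, 0)
  | S z' => let (a, b) := unpair z' in
            match a with 0 => (S b, 0) | S a' => (a', S b) end
  end.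

Lemma unpair_spec z : pair (fst (unpair z)) (snd (unpair z)) = z.
Proof.
  induction z as [|z IH]; [reflexivity|].
  simpl; destruct (unpair z) as [a b]; simpl in *.
  destruct a as [|a']; unfold pair in *; simpl in *.
  - rewrite !Nat.add_0_r; lia.
  - replace (a' + S b) with (S (a' + b)) by lia; simpl; lia.
Qed.

Definition pfst (z : nat) : nat := fst (unpair z).
Definition psnd (z : nat) : nat := snd (unpair z).

Lemma pair_pfst_psnd z : pair (pfst z) (psnd z) = z.
Proof. apply unpair_spec. Qed.

Lemma pfst_pair a b : pfst (pair a b) = a.
Proof. pose proof (pair_pfst_psnd (pair a b)) as H; apply pair_inj in H; tauto. Qed.

Lemma psnd_pair a b : psnd (pair a b) = b.
Proof. pose proof (pair_pfst_psnd (pair a b)) as H; apply pair_inj in H; tauto. Qed.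

Lemma pfst_0 : pfst 0 = 0.
Proof. rewrite <- pair_0_0; apply pfst_pair. Qed.

Lemma psnd_0 : psnd 0 = 0.
Proof. rewrite <- pair_0_0; apply psnd_pair. Qed.

Global Opaque pair.
Global Arguments pfst : simpl never.
Global Arguments psnd : simpl never.

Ltac unpair_simpl := repeat (rewrite pfst_pair || rewrite psnd_pair).

Lemma encode_inj c d : encode c = encode d -> c = d.
Proof.
  revert d; induction c; destruct d; simpl; intro H;
    repeat match goal with
    | H : pair _ _ = pair _ _ |- _ => apply pair_inj in H; destruct H
    end; try discriminate; f_equal; auto.
Qed.

(* Unlike [eval_ind], this principle also gives induction hypotheses for the premises of
   [evMu] that sit under an existential. *)
Fixpoint eval_ind_nested (O : nat -> nat) (P : code -> nat -> nat -> Prop)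
  (hZero : forall x, P cZero x 0)
  (hSucc : forall x, P cSucc x (S x))
  (hId : forall x, P cId x x)
  (hFst : forall a b, P cFst (pair a b) a)
  (hSnd : forall a b, P cSnd (pair a b) b)
  (hOracle : forall x, P cOracle x (O x))
  (hPair : forall f g x a b, eval O f x a -> P f x a -> eval O g x b -> P g x b ->
     P (cPair f g) x (pair a b))
  (hComp : forall f g x y z, eval O g x y -> P g x y -> eval O f y z -> P f y z ->
     P (cComp f g) x z)
  (hPrec0 : forall f g x v, eval O f x v -> P f x v -> P (cPrec f g) (pair x 0) v)
  (hPrecS : forall f g x y u v,
     eval O (cPrec f g) (pair x y) u -> P (cPrec f g) (pair x y) u ->
     eval O g (pair x (pair y u)) v -> P g (pair x (pair y u)) v ->
     P (cPrec f g) (pair x (S y)) v)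
  (hMu : forall f x y, eval O f (pair x y) 0 -> P f (pair x y) 0 ->
     (forall z, z < y -> exists w, eval O f (pair x z) (S w) /\ P f (pair x z) (S w)) ->
     P (cMu f) x y)
  c x v (H : eval O c x v) {struct H} : P c x v.
Proof.
  pose (rec := eval_ind_nested O P hZero hSucc hId hFst hSnd hOracle hPair hComp
                 hPrec0 hPrecS hMu).
  destruct H.
  - apply hZero.
  - apply hSucc.
  - apply hId.
  - apply hFst.
  - apply hSnd.
  - apply hOracle.
  - apply hPair; auto.
  - eapply hComp; eauto.
  - apply hPrec0; auto.
  - eapply hPrecS; eauto.
  - apply hMu; [exact H | exact (rec _ _ _ H) |].
    intros z Hz; destruct (H0 z Hz) as [w Hw]; exists w; split; [exact Hw | exact (rec _ _ _ Hw)].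
Defined.

Lemma eval_functional O c x v : eval O c x v -> forall v', eval O c x v' -> v = v'.
Proof.
  intro H; induction H using eval_ind_nested; intros v' H'; inversion H'; subst;
    repeat match goal with
    | H : pair _ _ = pair _ _ |- _ => apply pair_inj in H; destruct H; subst
    | H : S _ = S _ |- _ => injection H; clear H; intros; subst
    end; try reflexivity; try discriminate; clear H';
    repeat match goal with
    | IH : forall v', eval ?O ?c ?x v' -> ?v = v', E : eval ?O ?c ?x ?w |- _ =>
        let h := fresh in pose proof (IH _ E) as h; clear E; subst
    end; auto.
  match goal with |- ?y = ?y' => destruct (lt_eq_lt_dec y y') as [[Hlt|]|Hlt]; auto end.
  - match goal with Hm : forall z, z < _ -> exists w, eval _ _ _ _ |- _ =>
      destruct (Hm _ Hlt) as [w Hw] end.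
    match goal with IH : forall v', eval ?O ?c ?x v' -> 0 = v' |- _ =>
      apply IH in Hw; discriminate end.
  - match goal with Hm : forall z, z < _ -> exists w, _ /\ _ |- _ =>
      destruct (Hm _ Hlt) as [w [_ Hw]] end.
    match goal with E : eval _ _ _ 0 |- _ => apply Hw in E; discriminate end.
Qed.

(** * Primitive recursive terms *)

Inductive prim : Type :=
  | Zero | Succ | Id | Fst | Snd
  | Pair (f g : prim) | Comp (f g : prim) | Rec (f g : prim).

Fixpoint primrec (F G : nat -> nat) (x y : nat) : nat :=
  match y with 0 => F x | S y' => G (pair x (pair y' (primrec F G x y'))) end.

Fixpoint den (p : prim) (z : nat) : nat :=
  match p with
  | Zero => 0
  | Succ => S z
  | Id => z
  | Fst => pfst z
  | Snd => psnd z
  | Pair f g => pair (den f z) (den g z)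
  | Comp f g => den f (den g z)
  | Rec f g => primrec (den f) (den g) (pfst z) (psnd z)
  end.

Fixpoint compile (p : prim) : code :=
  match p with
  | Zero => cZero
  | Succ => cSucc
  | Id => cId
  | Fst => cFst
  | Snd => cSnd
  | Pair f g => cPair (compile f) (compile g)
  | Comp f g => cComp (compile f) (compile g)
  | Rec f g => cPrec (compile f) (compile g)
  end.

Lemma eval_compile O p z : eval O (compile p) z (den p z).
Proof.
  revert z; induction p; intro z; simpl; try constructor; auto.
  - rewrite <- (pair_pfst_psnd z) at 1; constructor.
  - rewrite <- (pair_pfst_psnd z) at 1; constructor.
  - econstructor; eauto.
  - rewrite <- (pair_pfst_psnd z) at 1.
    generalize (psnd z) as y; induction y; simpl; econstructor; eauto.
Qed.

Lemma eval_compile_eq O p z v : den p z = v -> eval O (compile p) z v.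
Proof. intros <-; apply eval_compile. Qed.

Definition b2n (b : bool) : nat := if b then 1 else 0.
Definition n2b (n : nat) : bool := negb (n =? 0).

Lemma n2b_b2n b : n2b (b2n b) = b.
Proof. destruct b; reflexivity. Qed.

Lemma b2n_if (c a b : bool) : b2n (if c then a else b) = if c then b2n a else b2n b.
Proof. destruct c; reflexivity. Qed.

Lemma n2b_true n : n2b n = true <-> n <> 0.
Proof. unfold n2b; destruct n; simpl; split; congruence. Qed.

Lemma n2b_false n : n2b n = false <-> n = 0.
Proof. unfold n2b; destruct n; simpl; split; congruence. Qed.

Fixpoint exb (f : nat -> bool) (j : nat) : bool :=
  match j with 0 => false | S j' => exb f j' || f j' end.

Fixpoint allb (f : nat -> bool) (j : nat) : bool :=
  match j with 0 => true | S j' => allb f j' && f j' end.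

Lemma exb_spec f j : exb f j = true <-> exists y, y < j /\ f y = true.
Proof.
  induction j; simpl.
  - split; [discriminate | intros [y [H _]]; lia].
  - rewrite orb_true_iff, IHj; split.
    + intros [[y [H1 H2]]|H]; [exists y; split; auto; lia | exists j; auto].
    + intros [y [H1 H2]]; destruct (Nat.eq_dec y j); subst; auto.
      left; exists y; split; auto; lia.
Qed.

Lemma allb_spec f j : allb f j = true <-> forall y, y < j -> f y = true.
Proof.
  induction j; simpl.
  - split; auto; intros; lia.
  - rewrite andb_true_iff, IHj; split.
    + intros [H1 H2] y Hy; destruct (Nat.eq_dec y j); subst; auto; apply H1; lia.
    + intros H; split; auto.
Qed.

Lemma allb_impl (f g : nat -> bool) j :
  (forall z, f z = true -> g z = true) -> allb f j = true -> allb g j = true.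
Proof. rewrite !allb_spec; auto. Qed.

Lemma least_witness (f : nat -> bool) m :
  f m = true -> exists y, f y = true /\ forall z, z < y -> f z = false.
Proof.
  induction m as [m IH] using (well_founded_induction lt_wf); intro Hm.
  destruct (exb f m) eqn:E.
  - apply exb_spec in E; destruct E as [z [Hz Hfz]]; exact (IH z Hz Hfz).
  - exists m; split; auto; intros z Hz.
    apply not_true_is_false; intro Hfz.
    assert (exb f m = true) by (apply exb_spec; eauto); congruence.
Qed.

(* Combinators; booleans are coded by [b2n], and [n2b] reads any nonzero number as true. *)
Fixpoint CONST (n : nat) : prim := match n with 0 => Zero | S n' => Comp Succ (CONST n') end.
Definition FST A := Comp Fst A.
Definition SND A := Comp Snd A.
Definition SUCC A := Comp Succ A.
Definition ITE C A B := Comp (Rec Snd (Comp Fst Fst)) (Pair (Pair A B) C).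
Definition NOT A := ITE A Zero (CONST 1).
Definition AND A B := ITE A (ITE B (CONST 1) Zero) Zero.
Definition OR A B := ITE A (CONST 1) (ITE B (CONST 1) Zero).
Definition ADD A B := Comp (Rec Id (Comp Succ (Comp Snd Snd))) (Pair A B).
Definition PRED A := Comp (Comp (Rec Zero (Comp Fst Snd)) (Pair Zero Id)) A.
Definition SUB A B := Comp (Rec Id (PRED (Comp Snd Snd))) (Pair A B).
Definition EQ A B := NOT (ADD (SUB A B) (SUB B A)).
Definition LT A B := NOT (SUB (SUCC A) B).
(* [P] is applied to [pair w y], where [w] is the value of [W]. *)
Definition BEX P W J :=
  Comp (Rec Zero (OR (Comp Snd Snd) (Comp P (Pair Fst (Comp Fst Snd))))) (Pair W J).
Definition BALL P W J :=
  Comp (Rec (CONST 1) (AND (Comp Snd Snd) (Comp P (Pair Fst (Comp Fst Snd))))) (Pair W J).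
Definition ITER_SND L J := Comp (Rec Id (Comp Snd (Comp Snd Snd))) (Pair L J).

Lemma den_CONST n z : den (CONST n) z = n.
Proof. induction n; simpl; auto. Qed.

Lemma den_ITE C A B z :
  den (ITE C A B) z = if n2b (den C z) then den A z else den B z.
Proof. unfold ITE, n2b; simpl; unpair_simpl; destruct (den C z); simpl; unpair_simpl; reflexivity. Qed.

Lemma den_NOT A z : den (NOT A) z = b2n (negb (n2b (den A z))).
Proof. unfold NOT; rewrite den_ITE; destruct (n2b _); reflexivity. Qed.

Lemma den_AND A B z : den (AND A B) z = b2n (n2b (den A z) && n2b (den B z)).
Proof. unfold AND; rewrite !den_ITE; destruct (n2b _), (n2b _); reflexivity. Qed.

Lemma den_OR A B z : den (OR A B) z = b2n (n2b (den A z) || n2b (den B z)).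
Proof. unfold OR; rewrite !den_ITE; destruct (n2b _), (n2b _); reflexivity. Qed.

Lemma den_ADD A B z : den (ADD A B) z = den A z + den B z.
Proof.
  unfold ADD; cbn [den]; unpair_simpl.
  generalize (den B z) as b; induction b; simpl; unpair_simpl; lia.
Qed.

Lemma den_PRED A z : den (PRED A) z = pred (den A z).
Proof. unfold PRED; simpl; unpair_simpl; destruct (den A z); simpl; unpair_simpl; reflexivity. Qed.

Lemma den_SUB A B z : den (SUB A B) z = den A z - den B z.
Proof.
  unfold SUB; cbn [den]; unpair_simpl.
  generalize (den B z) as b; induction b; [simpl; lia|].
  cbn [primrec]; rewrite den_PRED; cbn [den]; unpair_simpl; rewrite IHb; lia.
Qed.

Lemma den_EQ A B z : den (EQ A B) z = b2n (den A z =? den B z).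
Proof.
  unfold EQ; rewrite den_NOT, den_ADD, !den_SUB; unfold n2b.
  destruct (Nat.eqb_spec (den A z) (den B z)) as [E|NE].
  - rewrite E, Nat.sub_diag; reflexivity.
  - destruct (Nat.eqb_spec (den A z - den B z + (den B z - den A z)) 0); [lia | reflexivity].
Qed.

Lemma den_LT A B z : den (LT A B) z = b2n (den A z <? den B z).
Proof.
  unfold LT, SUCC; rewrite den_NOT, den_SUB; cbn [den]; unfold n2b.
  destruct (Nat.ltb_spec (den A z) (den B z)).
  - replace (S (den A z) - den B z) with 0 by lia; reflexivity.
  - destruct (Nat.eqb_spec (S (den A z) - den B z) 0); [lia | reflexivity].
Qed.

Lemma den_BEX P W J z f :
  (forall y, y < den J z -> den P (pair (den W z) y) = b2n (f y)) ->
  den (BEX P W J) z = b2n (exb f (den J z)).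
Proof.
  unfold BEX; cbn [den]; unpair_simpl.
  generalize (den J z) as j; intros j H; induction j; cbn [primrec exb]; [reflexivity|].
  rewrite den_OR, IHj by (intros; apply H; lia).
  cbn [den]; unpair_simpl; rewrite n2b_b2n, H, n2b_b2n by lia; reflexivity.
Qed.

Lemma den_BALL P W J z f :
  (forall y, y < den J z -> den P (pair (den W z) y) = b2n (f y)) ->
  den (BALL P W J) z = b2n (allb f (den J z)).
Proof.
  unfold BALL; cbn [den]; unpair_simpl.
  generalize (den J z) as j; intros j H; induction j; cbn [primrec allb]; [apply den_CONST|].
  rewrite den_AND, IHj by (intros; apply H; lia).
  cbn [den]; unpair_simpl; rewrite n2b_b2n, H, n2b_b2n by lia; reflexivity.
Qed.

Lemma den_ITER_SND L J z : den (ITER_SND L J) z = Nat.iter (den J z) psnd (den L z).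
Proof.
  unfold ITER_SND; cbn [den]; unpair_simpl.
  generalize (den J z) as j; induction j; cbn [primrec]; auto.
  rewrite IHj; cbn [den]; unpair_simpl; reflexivity.
Qed.

(** * Certificates of halting computations *)

Definition shead (z : nat) : nat := pfst (pred z).
Definition stail (z : nat) : nat := psnd (pred z).
Definition sdrop (x z : nat) : nat := Nat.iter x stail z.

Definition entry (L j : nat) : nat := pfst (Nat.iter j psnd L).
Definition mem_below (L j : nat) (P : nat -> bool) : bool := exb (fun j1 => P (entry L j1)) j.

Definition halt_fact (c x v : nat) : nat := pair 0 (pair c (pair x v)).
Definition code_fact (c : nat) : nat := pair 1 (pair c 0).
Definition fact_kind (nd : nat) : nat := pfst nd.
Definition fact_code (nd : nat) : nat := pfst (psnd nd).
Definition fact_input (nd : nat) : nat := pfst (psnd (psnd nd)).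
Definition fact_value (nd : nat) : nat := psnd (psnd (psnd nd)).

(* [fact_ok mem s nd]: the fact [nd] follows in one step from the facts satisfying [mem]
   and from the oracle values recorded in the string [s].  A code fact [code_fact c]
   says that [c] encodes a code; a halting fact [halt_fact c x v] says that the code
   encoded by [c] outputs [v] on input [x].  The tag of [c] is its first component. *)
Definition fact_ok (mem : (nat -> bool) -> bool) (s nd : nat) : bool :=
  let c := fact_code nd in let x := fact_input nd in let v := fact_value nd in
  let tag := pfst c in let b := psnd c in
  let has_halt c' x' v' := mem (fun y => y =? halt_fact c' x' v') in
  let has_code c' := mem (fun y => y =? code_fact c') in
  if n2b (fact_kind nd) then
    ((tag <? 6) && (b =? 0))
    || ((((tag =? 6) || ((tag =? 7) || (tag =? 8))) && has_code (pfst b) && has_code (psnd b))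
    || ((tag =? 9) && has_code b))
  else if tag =? 0 then (b =? 0) && (v =? 0)
  else if tag =? 1 then (b =? 0) && (v =? S x)
  else if tag =? 2 then (b =? 0) && (v =? x)
  else if tag =? 3 then (b =? 0) && (v =? pfst x)
  else if tag =? 4 then (b =? 0) && (v =? psnd x)
  else if tag =? 5 then (b =? 0) && n2b (sdrop x s) && (v =? shead (sdrop x s))
  else if tag =? 6 then has_halt (pfst b) x (pfst v) && has_halt (psnd b) x (psnd v)
  else if tag =? 7 then
    mem (fun y => (y =? halt_fact (psnd b) x (fact_value y)) && has_halt (pfst b) (fact_value y) v)
  else if tag =? 8 then
    (if n2b (psnd x) then
       mem (fun y => (y =? halt_fact c (pair (pfst x) (pred (psnd x))) (fact_value y))
         && has_halt (psnd b) (pair (pfst x) (pair (pred (psnd x)) (fact_value y))) v)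
     else has_halt (pfst b) (pfst x) v && has_code (psnd b))
  else if tag =? 9 then
    has_halt b (pair x v) 0 &&
    allb (fun z => mem (fun y => (y =? halt_fact b (pair x z) (fact_value y))
                                 && n2b (fact_value y))) v
  else false.

Definition entry_ok (s L j : nat) : bool := fact_ok (mem_below L j) s (entry L j).

(* A certificate [d] codes a length [pfst d] and a list [psnd d] of facts. *)
Definition certifies (s e n d : nat) : bool :=
  allb (entry_ok s (psnd d)) (pfst d) &&
  mem_below (psnd d) (pfst d) (fun y => y =? halt_fact e n (fact_value y)).

Definition uncertified (e n s : nat) : bool := negb (exb (certifies s e n) (S s)).

(* [proj n k] reads component [k] of a left-nested [n]-tuple [pair (... (pair x0 x1) ...) x(n-1)]. *)
Fixpoint proj (n k : nat) : prim :=
  match n with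
  | 0 => Id
  | S n' => if k =? n' then match n' with 0 => Id | _ => Snd end else Comp (proj n' k) Fst
  end.

Definition ENTRY L J := FST (ITER_SND L J).
Definition HALT_FACT C X V := Pair Zero (Pair C (Pair X V)).
Definition CODE_FACT C := Pair (CONST 1) (Pair C Zero).
Definition FACT_KIND N := FST N.
Definition FACT_CODE N := FST (SND N).
Definition FACT_INPUT N := FST (SND (SND N)).
Definition FACT_VALUE N := SND (SND (SND N)).
Definition SDROP X S := Comp (Rec Id (Comp (Comp Snd (PRED Id)) (Comp Snd Snd))) (Pair S X).
Definition SHEAD A := FST (PRED A).

Lemma den_ENTRY L J z : den (ENTRY L J) z = entry (den L z) (den J z).
Proof. unfold ENTRY, FST; cbn [den]; rewrite den_ITER_SND; reflexivity. Qed.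

Lemma den_HALT_FACT C X V z : den (HALT_FACT C X V) z = halt_fact (den C z) (den X z) (den V z).
Proof. reflexivity. Qed.

Lemma den_CODE_FACT C z : den (CODE_FACT C) z = code_fact (den C z).
Proof. unfold CODE_FACT; cbn [den]; rewrite den_CONST; reflexivity. Qed.

Lemma den_FACT_KIND N z : den (FACT_KIND N) z = fact_kind (den N z).
Proof. reflexivity. Qed.

Lemma den_FACT_CODE N z : den (FACT_CODE N) z = fact_code (den N z).
Proof. reflexivity. Qed.

Lemma den_FACT_INPUT N z : den (FACT_INPUT N) z = fact_input (den N z).
Proof. reflexivity. Qed.

Lemma den_FACT_VALUE N z : den (FACT_VALUE N) z = fact_value (den N z).
Proof. reflexivity. Qed.

Lemma den_SDROP X S z : den (SDROP X S) z = sdrop (den X z) (den S z).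
Proof.
  unfold SDROP, sdrop; cbn [den]; unpair_simpl.
  generalize (den X z) as j; induction j; cbn [primrec]; auto.
  rewrite IHj; cbn [den]; unpair_simpl; rewrite den_PRED; reflexivity.
Qed.

Lemma den_SHEAD A z : den (SHEAD A) z = shead (den A z).
Proof. unfold SHEAD, FST; cbn [den]; rewrite den_PRED; reflexivity. Qed.

#[local] Hint Rewrite den_CONST den_ITE den_NOT den_AND den_OR den_EQ den_LT den_PRED
  den_ENTRY den_HALT_FACT den_CODE_FACT den_FACT_KIND den_FACT_CODE den_FACT_INPUT
  den_FACT_VALUE den_SDROP den_SHEAD pfst_pair psnd_pair n2b_b2n : den.

Ltac den_simpl :=
  repeat progress (autorewrite with den; cbn [den proj Nat.eqb FST SND SUCC]).

(* The membership tests below read their parameters from a tuple [w] and are run on [pair w j1]. *)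
Definition MEM_HALT L J C X V :=
  BEX (EQ (ENTRY (Comp (proj 4 0) Fst) Snd)
          (HALT_FACT (Comp (proj 4 1) Fst) (Comp (proj 4 2) Fst) (Comp (proj 4 3) Fst)))
      (Pair (Pair (Pair L C) X) V) J.

Definition MEM_CODE L J C :=
  BEX (EQ (ENTRY (Comp (proj 2 0) Fst) Snd) (CODE_FACT (Comp (proj 2 1) Fst))) (Pair L C) J.

Definition MEM_COMP L J B X V :=
  let l := Comp (proj 5 0) Fst in let j := Comp (proj 5 1) Fst in
  let b := Comp (proj 5 2) Fst in let x := Comp (proj 5 3) Fst in
  let v := Comp (proj 5 4) Fst in
  let nd := ENTRY l Snd in
  BEX (AND (EQ nd (HALT_FACT (SND b) x (FACT_VALUE nd))) (MEM_HALT l j (FST b) (FACT_VALUE nd) v))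
      (Pair (Pair (Pair (Pair L J) B) X) V) J.

Definition MEM_PREC L J C B X V :=
  let l := Comp (proj 6 0) Fst in let j := Comp (proj 6 1) Fst in
  let c := Comp (proj 6 2) Fst in let b := Comp (proj 6 3) Fst in
  let x := Comp (proj 6 4) Fst in let v := Comp (proj 6 5) Fst in
  let nd := ENTRY l Snd in
  BEX (AND (EQ nd (HALT_FACT c (Pair (FST x) (PRED (SND x))) (FACT_VALUE nd)))
           (MEM_HALT l j (SND b) (Pair (FST x) (Pair (PRED (SND x)) (FACT_VALUE nd))) v))
      (Pair (Pair (Pair (Pair (Pair L J) C) B) X) V) J.

Definition MEM_MU_FAILS L J B X V :=
  let w := Comp Fst Fst in let z := Comp Snd Fst in
  let l := Comp (proj 4 0) w in let b := Comp (proj 4 2) w in let x := Comp (proj 4 3) w in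
  let nd := ENTRY l Snd in
  BALL (BEX (AND (EQ nd (HALT_FACT b (Pair x z) (FACT_VALUE nd))) (FACT_VALUE nd))
            Id (Comp (proj 4 1) Fst))
       (Pair (Pair (Pair L J) B) X) V.

Lemma den_MEM_HALT L J C X V z :
  den (MEM_HALT L J C X V) z =
  b2n (mem_below (den L z) (den J z) (fun y => y =? halt_fact (den C z) (den X z) (den V z))).
Proof. apply den_BEX; intros; den_simpl; reflexivity. Qed.

Lemma den_MEM_CODE L J C z :
  den (MEM_CODE L J C) z =
  b2n (mem_below (den L z) (den J z) (fun y => y =? code_fact (den C z))).
Proof. apply den_BEX; intros; den_simpl; reflexivity. Qed.

#[local] Hint Rewrite den_MEM_HALT den_MEM_CODE : den.

Lemma den_MEM_COMP L J B X V z :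
  let l := den L z in let j := den J z in let b := den B z in
  den (MEM_COMP L J B X V) z =
  b2n (mem_below l j (fun y => (y =? halt_fact (psnd b) (den X z) (fact_value y))
         && mem_below l j (fun y' => y' =? halt_fact (pfst b) (fact_value y) (den V z)))).
Proof. apply den_BEX; intros; den_simpl; reflexivity. Qed.

Lemma den_MEM_PREC L J C B X V z :
  let l := den L z in let j := den J z in let b := den B z in let x := den X z in
  den (MEM_PREC L J C B X V) z =
  b2n (mem_below l j (fun y =>
         (y =? halt_fact (den C z) (pair (pfst x) (pred (psnd x))) (fact_value y))
         && mem_below l j (fun y' => y' =? halt_fact (psnd b)
                              (pair (pfst x) (pair (pred (psnd x)) (fact_value y))) (den V z)))).
Proof. apply den_BEX; intros; den_simpl; reflexivity. Qed.

Lemma den_MEM_MU_FAILS L J B X V z :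
  let l := den L z in let j := den J z in
  den (MEM_MU_FAILS L J B X V) z =
  b2n (allb (fun u => mem_below l j (fun y =>
         (y =? halt_fact (den B z) (pair (den X z) u) (fact_value y)) && n2b (fact_value y)))
       (den V z)).
Proof.
  apply den_BALL; intros; unfold mem_below.
  erewrite den_BEX; [cbn [den proj Nat.eqb]; unpair_simpl; reflexivity|].
  intros; den_simpl; reflexivity.
Qed.

#[local] Hint Rewrite den_MEM_COMP den_MEM_PREC den_MEM_MU_FAILS : den.

Definition ENTRY_OK :=
  let s := Comp Fst Fst in let l := Comp Snd Fst in let j := Snd in
  let nd := ENTRY l j in
  let c := FACT_CODE nd in let x := FACT_INPUT nd in let v := FACT_VALUE nd in
  let tag := FST c in let b := SND c in
  ITE (FACT_KIND nd)
    (OR (AND (LT tag (CONST 6)) (EQ b Zero))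
     (OR (AND (AND (OR (EQ tag (CONST 6)) (OR (EQ tag (CONST 7)) (EQ tag (CONST 8))))
                   (MEM_CODE l j (FST b))) (MEM_CODE l j (SND b)))
         (AND (EQ tag (CONST 9)) (MEM_CODE l j b))))
  (ITE (EQ tag Zero) (AND (EQ b Zero) (EQ v Zero))
  (ITE (EQ tag (CONST 1)) (AND (EQ b Zero) (EQ v (SUCC x)))
  (ITE (EQ tag (CONST 2)) (AND (EQ b Zero) (EQ v x))
  (ITE (EQ tag (CONST 3)) (AND (EQ b Zero) (EQ v (FST x)))
  (ITE (EQ tag (CONST 4)) (AND (EQ b Zero) (EQ v (SND x)))
  (ITE (EQ tag (CONST 5)) (AND (AND (EQ b Zero) (SDROP x s)) (EQ v (SHEAD (SDROP x s))))
  (ITE (EQ tag (CONST 6)) (AND (MEM_HALT l j (FST b) x (FST v)) (MEM_HALT l j (SND b) x (SND v)))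
  (ITE (EQ tag (CONST 7)) (MEM_COMP l j b x v)
  (ITE (EQ tag (CONST 8))
     (ITE (SND x) (MEM_PREC l j c b x v) (AND (MEM_HALT l j (FST b) (FST x) v) (MEM_CODE l j (SND b))))
  (ITE (EQ tag (CONST 9)) (AND (MEM_HALT l j b (Pair x v) Zero) (MEM_MU_FAILS l j b x v))
   Zero)))))))))).

Lemma den_ENTRY_OK s L j : den ENTRY_OK (pair (pair s L) j) = b2n (entry_ok s L j).
Proof.
  unfold ENTRY_OK; den_simpl.
  unfold entry_ok, fact_ok; cbv zeta; rewrite !b2n_if; reflexivity.
Qed.

Definition CERTIFIES :=
  let s := Comp Snd Fst in let e := Comp Fst (Comp Fst Fst) in let n := Comp Snd (Comp Fst Fst) in
  let d := Snd in
  let nd := ENTRY (Comp (proj 3 0) Fst) Snd in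
  AND (BALL ENTRY_OK (Pair s (SND d)) (FST d))
      (BEX (EQ nd (HALT_FACT (Comp (proj 3 1) Fst) (Comp (proj 3 2) Fst) (FACT_VALUE nd)))
           (Pair (Pair (SND d) e) n) (FST d)).

Lemma den_CERTIFIES e n s d :
  den CERTIFIES (pair (pair (pair e n) s) d) = b2n (certifies s e n d).
Proof.
  unfold CERTIFIES, certifies, mem_below; rewrite den_AND.
  erewrite den_BALL, den_BEX; [cbn [den FST]; unpair_simpl; rewrite !n2b_b2n; reflexivity | |].
  - intros; den_simpl; reflexivity.
  - intros; cbn [den SND]; unpair_simpl; apply den_ENTRY_OK.
Qed.

Definition UNCERTIFIED := NOT (BEX CERTIFIES Id (SUCC Snd)).

Lemma den_UNCERTIFIED e n s : den UNCERTIFIED (pair (pair e n) s) = b2n (uncertified e n s).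
Proof.
  unfold UNCERTIFIED, uncertified; rewrite den_NOT.
  erewrite den_BEX; [cbn [den SUCC]; unpair_simpl; rewrite n2b_b2n; reflexivity|].
  intros; apply den_CERTIFIES.
Qed.

(** * Soundness of certificates *)

Definition consistent (O : nat -> nat) (s : nat) : Prop :=
  forall x, n2b (sdrop x s) = true -> O x = shead (sdrop x s).

Definition fact_sound (O : nat -> nat) (nd : nat) : Prop :=
  (fact_kind nd <> 0 -> exists c, encode c = fact_code nd) /\
  (fact_kind nd = 0 -> exists c, encode c = fact_code nd /\ eval O c (fact_input nd) (fact_value nd)).

Lemma fact_kind_halt c x v : fact_kind (halt_fact c x v) = 0.
Proof. unfold fact_kind, halt_fact; unpair_simpl; reflexivity. Qed.

Lemma fact_code_halt c x v : fact_code (halt_fact c x v) = c.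
Proof. unfold fact_code, halt_fact; unpair_simpl; reflexivity. Qed.

Lemma fact_input_halt c x v : fact_input (halt_fact c x v) = x.
Proof. unfold fact_input, halt_fact; unpair_simpl; reflexivity. Qed.

Lemma fact_value_halt c x v : fact_value (halt_fact c x v) = v.
Proof. unfold fact_value, halt_fact; unpair_simpl; reflexivity. Qed.

Lemma halt_fact_inv nd c x v :
  nd = halt_fact c x v ->
  fact_kind nd = 0 /\ fact_code nd = c /\ fact_input nd = x /\ fact_value nd = v.
Proof.
  intros ->; rewrite fact_kind_halt, fact_code_halt, fact_input_halt, fact_value_halt; auto.
Qed.

Lemma fact_kind_code c : fact_kind (code_fact c) = 1.
Proof. unfold fact_kind, code_fact; unpair_simpl; reflexivity. Qed.

Lemma fact_code_code c : fact_code (code_fact c) = c.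
Proof. unfold fact_code, code_fact; unpair_simpl; reflexivity. Qed.

Lemma code_fact_inv nd c : nd = code_fact c -> fact_kind nd = 1 /\ fact_code nd = c.
Proof. intros ->; rewrite fact_kind_code, fact_code_code; auto. Qed.

Lemma encode_prec_inv c b :
  encode c = pair 8 b -> exists f g, c = cPrec f g /\ encode f = pfst b /\ encode g = psnd b.
Proof.
  destruct c; simpl; intro H; apply pair_inj in H; destruct H as [H1 H2]; try discriminate.
  subst; exists c1, c2; unpair_simpl; auto.
Qed.

Ltac bool_hyps :=
  repeat match goal with
  | H : (_ && _) = true |- _ => apply andb_true_iff in H; destruct H
  | H : (_ || _) = true |- _ => apply orb_true_iff in H; destruct H
  | H : (_ =? _) = true |- _ => apply Nat.eqb_eq in H
  | H : (_ <? _) = true |- _ => apply Nat.ltb_lt in H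
  end.

Section FactSoundness.

Variable O : nat -> nat.
Variable mem : (nat -> bool) -> bool.
Hypothesis mem_sound : forall P, mem P = true -> exists y, P y = true /\ fact_sound O y.

Lemma mem_halt_sound c x v :
  mem (fun y => y =? halt_fact c x v) = true -> exists cc, encode cc = c /\ eval O cc x v.
Proof.
  intros H; destruct (mem_sound _ H) as [y [Hy [_ Hsound]]]; apply Nat.eqb_eq in Hy.
  apply halt_fact_inv in Hy; destruct Hy as [E1 [E2 [E3 E4]]].
  rewrite <- E2, <- E3, <- E4; auto.
Qed.

Lemma mem_halt_sound_value c x :
  mem (fun y => (y =? halt_fact c x (fact_value y)) && n2b (fact_value y)) = true ->
  exists cc w, encode cc = c /\ eval O cc x (S w).
Proof.
  intros H; destruct (mem_sound _ H) as [y [Hy [_ Hsound]]]; bool_hyps.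
  apply halt_fact_inv in H0; destruct H0 as [E1 [E2 [E3 _]]].
  destruct (Hsound E1) as [cc [Hcc Hev]]; apply n2b_true in H1.
  destruct (fact_value y) as [|w] eqn:Ew; [lia|].
  exists cc, w; rewrite <- E2, <- E3; auto.
Qed.

Lemma mem_code_sound c : mem (fun y => y =? code_fact c) = true -> exists cc, encode cc = c.
Proof.
  intros H; destruct (mem_sound _ H) as [y [Hy [Hsound _]]]; apply Nat.eqb_eq in Hy.
  apply code_fact_inv in Hy; destruct Hy as [E1 E2]; rewrite <- E2; apply Hsound; lia.
Qed.

Lemma code_fact_sound t b :
  ((t <? 6) && (b =? 0))
  || ((((t =? 6) || ((t =? 7) || (t =? 8)))
       && mem (fun y => y =? code_fact (pfst b)) && mem (fun y => y =? code_fact (psnd b)))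
  || ((t =? 9) && mem (fun y => y =? code_fact b))) = true ->
  exists cc, encode cc = pair t b.
Proof.
  intros H; apply orb_true_iff in H as [H|H]; [|apply orb_true_iff in H as [H|H]].
  - bool_hyps; subst.
    assert (t = 0 \/ t = 1 \/ t = 2 \/ t = 3 \/ t = 4 \/ t = 5) as [|[|[|[|[|]]]]] by lia; subst;
      [exists cZero | exists cSucc | exists cId | exists cFst | exists cSnd | exists cOracle];
      reflexivity.
  - apply andb_true_iff in H as [H Hg]; apply andb_true_iff in H as [Ht Hf].
    destruct (mem_code_sound _ Hf) as [f Ef]; destruct (mem_code_sound _ Hg) as [g Eg].
    rewrite <- (pair_pfst_psnd b), <- Ef, <- Eg; bool_hyps; subst;
      [exists (cPair f g) | exists (cComp f g) | exists (cPrec f g)]; reflexivity.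
  - bool_hyps; subst; destruct (mem_code_sound _ H0) as [f <-]; exists (cMu f); reflexivity.
Qed.

Lemma comp_fact_sound b x v :
  mem (fun y => (y =? halt_fact (psnd b) x (fact_value y))
                && mem (fun y' => y' =? halt_fact (pfst b) (fact_value y) v)) = true ->
  exists cc, encode cc = pair 7 b /\ eval O cc x v.
Proof.
  intros H; destruct (mem_sound _ H) as [y [Hy [_ Hsound]]]; bool_hyps.
  apply halt_fact_inv in H0; destruct H0 as [E1 [E2 [E3 _]]].
  destruct (Hsound E1) as [g [Hg Hevg]]; destruct (mem_halt_sound _ _ _ H1) as [f [Hf Hevf]].
  exists (cComp f g); split.
  - simpl; rewrite Hf, Hg, E2, pair_pfst_psnd; reflexivity.
  - rewrite E3 in Hevg; econstructor; eauto.
Qed.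

Lemma prec_fact_sound b x v :
  psnd x <> 0 ->
  mem (fun y => (y =? halt_fact (pair 8 b) (pair (pfst x) (pred (psnd x))) (fact_value y))
         && mem (fun y' => y' =? halt_fact (psnd b)
                              (pair (pfst x) (pair (pred (psnd x)) (fact_value y))) v)) = true ->
  exists cc, encode cc = pair 8 b /\ eval O cc x v.
Proof.
  intros Hx H; destruct (mem_sound _ H) as [y [Hy [_ Hsound]]]; bool_hyps.
  apply halt_fact_inv in H0; destruct H0 as [E1 [E2 [E3 _]]].
  destruct (Hsound E1) as [cc [Hcc Hevcc]]; rewrite E2 in Hcc.
  destruct (encode_prec_inv _ _ Hcc) as [f [g' [-> [Hf Hg']]]].
  destruct (mem_halt_sound _ _ _ H1) as [g [Hg Hevg]].
  assert (g' = g) as -> by (apply encode_inj; congruence).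
  exists (cPrec f g); split; [exact Hcc|].
  rewrite <- (pair_pfst_psnd x); replace (psnd x) with (S (pred (psnd x))) by lia.
  rewrite E3 in Hevcc; econstructor; eauto.
Qed.

Lemma prec0_fact_sound b x v :
  psnd x = 0 ->
  mem (fun y => y =? halt_fact (pfst b) (pfst x) v) = true ->
  mem (fun y => y =? code_fact (psnd b)) = true ->
  exists cc, encode cc = pair 8 b /\ eval O cc x v.
Proof.
  intros Hx H H0.
  destruct (mem_halt_sound _ _ _ H) as [f [Hf Hevf]]; destruct (mem_code_sound _ H0) as [g Hg].
  exists (cPrec f g); split.
  - simpl; rewrite Hf, Hg, pair_pfst_psnd; reflexivity.
  - rewrite <- (pair_pfst_psnd x), Hx; constructor; auto.
Qed.

Lemma mu_fact_sound b x v :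
  mem (fun y => y =? halt_fact b (pair x v) 0) = true ->
  allb (fun z => mem (fun y => (y =? halt_fact b (pair x z) (fact_value y))
                               && n2b (fact_value y))) v = true ->
  exists cc, encode cc = pair 9 b /\ eval O cc x v.
Proof.
  intros H H0.
  destruct (mem_halt_sound _ _ _ H) as [f [Hf Hevf]].
  exists (cMu f); split; [simpl; rewrite Hf; reflexivity|].
  constructor; auto; intros z Hz.
  apply allb_spec with (y := z) in H0; auto.
  destruct (mem_halt_sound_value _ _ H0) as [cc [w [Hcc Hev]]].
  assert (cc = f) as -> by (apply encode_inj; congruence); eauto.
Qed.

Lemma halt_fact_ok_sound s t b x v :
  consistent O s -> fact_ok mem s (halt_fact (pair t b) x v) = true ->
  exists cc, encode cc = pair t b /\ eval O cc x v.
Proof.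
  intros Hcons H.
  unfold fact_ok in H; cbv zeta in H.
  rewrite fact_kind_halt, fact_code_halt, fact_input_halt, fact_value_halt in H.
  rewrite pfst_pair, psnd_pair in H; cbn [n2b Nat.eqb negb] in H.
  destruct (t =? 0) eqn:T0; [bool_hyps; subst; exists cZero; split; [reflexivity | constructor]|].
  destruct (t =? 1) eqn:T1; [bool_hyps; subst; exists cSucc; split; [reflexivity | constructor]|].
  destruct (t =? 2) eqn:T2; [bool_hyps; subst; exists cId; split; [reflexivity | constructor]|].
  destruct (t =? 3) eqn:T3.
  { bool_hyps; subst; exists cFst; split; [reflexivity|].
    rewrite <- (pair_pfst_psnd x) at 1; constructor. }
  destruct (t =? 4) eqn:T4.
  { bool_hyps; subst; exists cSnd; split; [reflexivity|].
    rewrite <- (pair_pfst_psnd x) at 1; constructor. }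
  destruct (t =? 5) eqn:T5.
  { bool_hyps; subst; exists cOracle; split; [reflexivity|].
    rewrite <- (Hcons x); [constructor | assumption]. }
  destruct (t =? 6) eqn:T6.
  { bool_hyps; subst.
    destruct (mem_halt_sound _ _ _ H) as [f [Hf Hevf]].
    destruct (mem_halt_sound _ _ _ H0) as [g [Hg Hevg]].
    exists (cPair f g); split.
    - simpl; rewrite Hf, Hg, pair_pfst_psnd; reflexivity.
    - rewrite <- (pair_pfst_psnd v); constructor; auto. }
  destruct (t =? 7) eqn:T7; [bool_hyps; subst; exact (comp_fact_sound _ _ _ H)|].
  destruct (t =? 8) eqn:T8.
  { bool_hyps; subst; destruct (n2b (psnd x)) eqn:Hx.
    - apply n2b_true in Hx; exact (prec_fact_sound _ _ _ Hx H).
    - apply n2b_false in Hx; bool_hyps; exact (prec0_fact_sound _ _ _ Hx H H0). }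
  destruct (t =? 9) eqn:T9; [bool_hyps; subst; exact (mu_fact_sound _ _ _ H H0)|].
  discriminate.
Qed.

Lemma fact_ok_sound s nd : consistent O s -> fact_ok mem s nd = true -> fact_sound O nd.
Proof.
  intros Hcons H; split; intros Hkind.
  - unfold fact_ok in H; cbv zeta in H.
    destruct (n2b_true (fact_kind nd)) as [_ Hk]; rewrite (Hk Hkind) in H.
    rewrite <- (pair_pfst_psnd (fact_code nd)); exact (code_fact_sound _ _ H).
  - assert (Hnd : nd = halt_fact (pair (pfst (fact_code nd)) (psnd (fact_code nd)))
                                 (fact_input nd) (fact_value nd)).
    { unfold halt_fact, fact_kind, fact_code, fact_input, fact_value in *.
      rewrite !pair_pfst_psnd, <- Hkind, pair_pfst_psnd; reflexivity. }
    rewrite Hnd in H; rewrite <- (pair_pfst_psnd (fact_code nd)).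
    exact (halt_fact_ok_sound _ _ _ _ _ Hcons H).
Qed.

End FactSoundness.

Lemma entries_sound O s L N :
  consistent O s -> allb (entry_ok s L) N = true -> forall j, j < N -> fact_sound O (entry L j).
Proof.
  intros Hcons Hok j; rewrite allb_spec in Hok.
  induction j as [j IH] using (well_founded_induction lt_wf); intros Hj.
  apply (fact_ok_sound O (mem_below L j)) with s; [| exact Hcons | apply Hok; exact Hj].
  intros P HP; unfold mem_below in HP; apply exb_spec in HP; destruct HP as [j1 [Hj1 HP]].
  exists (entry L j1); split; auto; apply IH; lia.
Qed.

Lemma certifies_sound O s e n d :
  consistent O s -> certifies s e n d = true -> exists c v, encode c = e /\ eval O c n v.
Proof.
  intros Hcons H; unfold certifies, mem_below in H; bool_hyps.
  apply exb_spec in H0; destruct H0 as [j [Hj Hent]]; apply Nat.eqb_eq in Hent.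
  apply halt_fact_inv in Hent; destruct Hent as [E1 [E2 [E3 _]]].
  destruct (entries_sound O s (psnd d) (pfst d) Hcons H j Hj) as [_ Hsound].
  destruct (Hsound E1) as [c [Hc Hev]].
  exists c, (fact_value (entry (psnd d) j)); rewrite <- E2, <- E3; auto.
Qed.

(** * Completeness of certificates *)

Section FactMonotone.

Variables mem mem' : (nat -> bool) -> bool.
Hypothesis mem_mono :
  forall P Q, (forall y, P y = true -> Q y = true) -> mem P = true -> mem' Q = true.

Ltac mono :=
  lazymatch goal with
  | |- (_ && _) = true -> (_ && _) = true =>
      let Ha := fresh in let Hb := fresh in
      intros [Ha Hb]%andb_true_iff; apply andb_true_iff; split; [revert Ha | revert Hb]; mono
  | |- (_ || _) = true -> (_ || _) = true =>
      let Ha := fresh in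
      intros [Ha|Ha]%orb_true_iff; apply orb_true_iff; [left | right]; revert Ha; mono
  | |- mem _ = true -> mem' _ = true => apply mem_mono; intros ?; cbv beta; mono
  | |- allb _ _ = true -> allb _ _ = true => apply allb_impl; intros ?; cbv beta; mono
  | |- ?a = true -> ?a = true => exact (fun h => h)
  end.

Lemma fact_ok_mono s nd : fact_ok mem s nd = true -> fact_ok mem' s nd = true.
Proof.
  unfold fact_ok; cbv zeta.
  repeat match goal with |- context [if ?b then _ else _] => destruct b end; mono.
Qed.

End FactMonotone.

Definition encode_list (l : list nat) : nat := fold_right pair 0 l.

Definition justified (s : nat) (l : list nat) : Prop :=
  forall j, j < length l -> fact_ok (fun P => existsb P (firstn j l)) s (nth j l 0) = true.

Lemma iter_psnd_0 j : Nat.iter j psnd 0 = 0.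
Proof. induction j; simpl; [reflexivity | rewrite IHj; apply psnd_0]. Qed.

Lemma entry_encode_list l j : entry (encode_list l) j = nth j l 0.
Proof.
  unfold entry; revert j; induction l as [|a l IH]; intros [|j]; simpl encode_list.
  - apply pfst_0.
  - rewrite iter_psnd_0; apply pfst_0.
  - apply pfst_pair.
  - rewrite Nat.iter_succ_r, psnd_pair; apply IH.
Qed.

Lemma firstn_succ_nth (l : list nat) j : j < length l -> firstn (S j) l = firstn j l ++ [nth j l 0].
Proof.
  revert l; induction j; intros [|a l] H; simpl in *; try lia; auto.
  rewrite IHj by lia; reflexivity.
Qed.

Lemma mem_below_encode_list l j P :
  j <= length l -> mem_below (encode_list l) j P = existsb P (firstn j l).
Proof.
  induction j; intro H; [reflexivity|].
  unfold mem_below in *; cbn [exb]; rewrite IHj, firstn_succ_nth, existsb_app by lia.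
  rewrite entry_encode_list; simpl; rewrite orb_false_r; reflexivity.
Qed.

Lemma existsb_incl (P Q : nat -> bool) pre pre' :
  (forall y, P y = true -> Q y = true) -> incl pre pre' ->
  existsb P pre = true -> existsb Q pre' = true.
Proof.
  intros HPQ Hincl H; apply existsb_exists in H; destruct H as [y [Hy HP]].
  apply existsb_exists; eauto.
Qed.

Lemma existsb_in (P : nat -> bool) pre w : In w pre -> P w = true -> existsb P pre = true.
Proof. intros; apply existsb_exists; eauto. Qed.

Lemma fact_ok_incl s pre pre' nd :
  incl pre pre' ->
  fact_ok (fun P => existsb P pre) s nd = true -> fact_ok (fun P => existsb P pre') s nd = true.
Proof. intros H; apply fact_ok_mono; intros P Q HPQ; apply existsb_incl; auto. Qed.

Lemma justified_nil s : justified s [].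
Proof. intros j H; simpl in H; lia. Qed.

Lemma justified_app s l1 l2 : justified s l1 -> justified s l2 -> justified s (l1 ++ l2).
Proof.
  intros H1 H2 j Hj; rewrite length_app in Hj; rewrite firstn_app.
  destruct (lt_dec j (length l1)).
  - rewrite app_nth1 by auto; replace (j - length l1) with 0 by lia.
    rewrite firstn_O, app_nil_r; apply H1; auto.
  - rewrite app_nth2, firstn_all2 by lia.
    apply fact_ok_incl with (firstn (j - length l1) l2); [intros y Hy; apply in_or_app; auto|].
    apply H2; lia.
Qed.

Lemma justified_snoc s l nd :
  justified s l -> fact_ok (fun P => existsb P l) s nd = true -> justified s (l ++ [nd]).
Proof.
  intros H1 H2 j Hj; rewrite length_app in Hj; simpl in Hj; rewrite firstn_app.
  destruct (lt_dec j (length l)).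
  - rewrite app_nth1 by auto; replace (j - length l) with 0 by lia.
    rewrite firstn_O, app_nil_r; apply H1; auto.
  - replace j with (length l) by lia.
    rewrite firstn_all, Nat.sub_diag, firstn_O, app_nil_r, app_nth2, Nat.sub_diag by lia.
    exact H2.
Qed.

Lemma certifies_complete s e n v l :
  justified s l -> In (halt_fact e n v) l ->
  certifies s e n (pair (length l) (encode_list l)) = true.
Proof.
  intros Hl Hin; unfold certifies; unpair_simpl; apply andb_true_iff; split.
  - apply allb_spec; intros j Hj; unfold entry_ok.
    rewrite entry_encode_list; apply fact_ok_mono with (fun P => existsb P (firstn j l)).
    + intros P Q HPQ; rewrite mem_below_encode_list by lia.
      apply existsb_incl; auto using incl_refl.
    + apply Hl; auto.
  - rewrite mem_below_encode_list, firstn_all by lia.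
    apply existsb_in with (halt_fact e n v); auto.
    rewrite fact_value_halt; apply Nat.eqb_refl.
Qed.

Definition lists_oracle (s : nat) (O : nat -> nat) (M : nat) : Prop :=
  forall q, q < M -> n2b (sdrop q s) = true /\ shead (sdrop q s) = O q.

Lemma lists_oracle_le s O M M' : M' <= M -> lists_oracle s O M -> lists_oracle s O M'.
Proof. intros H1 H2 q Hq; apply H2; lia. Qed.

Definition derivable (O : nat -> nat) (nd : nat) : Prop :=
  exists l M, (forall s, lists_oracle s O M -> justified s l) /\ In nd l.

Lemma derivable_all O pre :
  (forall y, In y pre -> derivable O y) ->
  exists l M, (forall s, lists_oracle s O M -> justified s l) /\ incl pre l.
Proof.
  induction pre as [|a pre IH]; intros H.
  - exists [], 0; split; [intros; apply justified_nil | intros y []].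
  - destruct (H a (or_introl eq_refl)) as [l1 [M1 [H1 I1]]].
    destruct IH as [l2 [M2 [H2 I2]]]; [intros; apply H; right; auto|].
    exists (l1 ++ l2), (max M1 M2); split.
    + intros s Hs; apply justified_app;
        [apply H1 | apply H2]; (eapply lists_oracle_le; [|exact Hs]; lia).
    + intros y [<-|Hy]; apply in_or_app; auto.
Qed.

Lemma derivable_by O pre M nd :
  (forall y, In y pre -> derivable O y) ->
  (forall s, lists_oracle s O M -> fact_ok (fun P => existsb P pre) s nd = true) ->
  derivable O nd.
Proof.
  intros Hpre Hnd; destruct (derivable_all O pre Hpre) as [l [M' [Hl Hincl]]].
  exists (l ++ [nd]), (max M M'); split; [|apply in_or_app; right; left; auto].
  intros s Hs; apply justified_snoc.
  - apply Hl; eapply lists_oracle_le; [|exact Hs]; lia.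
  - apply fact_ok_incl with pre; auto; apply Hnd; eapply lists_oracle_le; [|exact Hs]; lia.
Qed.

Ltac fact_ok_simpl :=
  unfold fact_ok; cbv zeta;
  rewrite ?fact_kind_halt, ?fact_code_halt, ?fact_input_halt, ?fact_value_halt,
    ?fact_kind_code, ?fact_code_code;
  cbn [encode]; unpair_simpl; cbn [n2b negb Nat.eqb Nat.ltb Nat.leb andb orb];
  rewrite ?Nat.eqb_refl, ?andb_true_r, ?orb_false_r.

Ltac by_member :=
  match goal with |- existsb (fun y => y =? ?W) ?pre = true =>
    apply (existsb_in _ pre W); [simpl; tauto | cbv beta; apply Nat.eqb_refl]
  end.

Ltac by_members :=
  repeat match goal with |- (_ && _) = true => apply andb_true_iff; split end; by_member.

Lemma derivable_code O c : derivable O (code_fact (encode c)).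
Proof.
  induction c.
  all: try (apply derivable_by with [] 0; [intros _ [] | intros; fact_ok_simpl; reflexivity]).
  all: try (apply derivable_by with [code_fact (encode c1); code_fact (encode c2)] 0;
            [intros y [<-|[<-|[]]]; auto | intros; fact_ok_simpl; by_members]).
  apply derivable_by with [code_fact (encode c)] 0;
    [intros y [<-|[]]; auto | intros; fact_ok_simpl; by_members].
Qed.

Lemma derivable_mu_failures O f x y :
  (forall z, z < y -> exists w, derivable O (halt_fact (encode f) (pair x z) (S w))) ->
  exists pre, (forall nd, In nd pre -> derivable O nd) /\
    forall z, z < y -> exists w, In (halt_fact (encode f) (pair x z) (S w)) pre.
Proof.
  induction y as [|y IH]; intros H.
  - exists []; split; [intros _ [] | intros; lia].
  - destruct IH as [pre [Hpre Hin]]; [intros; apply H; lia|].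
    destruct (H y (Nat.lt_succ_diag_r y)) as [w Hw].
    exists (halt_fact (encode f) (pair x y) (S w) :: pre); split.
    + intros nd [<-|Hnd]; auto.
    + intros z Hz; destruct (Nat.eq_dec z y) as [->|Hne]; [exists w; left; auto|].
      destruct (Hin z ltac:(lia)) as [w' Hw']; exists w'; right; auto.
Qed.

Lemma derivable_halt O c x v : eval O c x v -> derivable O (halt_fact (encode c) x v).
Proof.
  intro H; induction H as [| | | | | | | | | |f x y _ IHzero Hfails] using eval_ind_nested.
  all: try solve [apply derivable_by with [] 0; [intros _ [] | intros; fact_ok_simpl; reflexivity]].
  - apply derivable_by with [] (S x); [intros _ []|].
    intros s Hs; destruct (Hs x ltac:(lia)) as [E1 E2]; fact_ok_simpl.
    rewrite E1, E2, Nat.eqb_refl; reflexivity.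
  - apply derivable_by with [halt_fact (encode f) x a; halt_fact (encode g) x b] 0;
      [intros nd [<-|[<-|[]]]; auto | intros; fact_ok_simpl; by_members].
  - apply derivable_by with [halt_fact (encode g) x y; halt_fact (encode f) y z] 0;
      [intros nd [<-|[<-|[]]]; auto | intros; fact_ok_simpl].
    apply existsb_in with (halt_fact (encode g) x y); [left; auto|].
    rewrite fact_value_halt, Nat.eqb_refl; cbn [andb]; by_member.
  - apply derivable_by with [halt_fact (encode f) x v; code_fact (encode g)] 0;
      [intros nd [<-|[<-|[]]]; auto using derivable_code | intros; fact_ok_simpl; by_members].
  - apply derivable_by with
      [halt_fact (encode (cPrec f g)) (pair x y) u; halt_fact (encode g) (pair x (pair y u)) v] 0;
      [intros nd [<-|[<-|[]]]; auto | intros; fact_ok_simpl].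
    apply existsb_in with (halt_fact (encode (cPrec f g)) (pair x y) u); [left; auto|].
    rewrite fact_value_halt; cbn [encode]; rewrite Nat.eqb_refl; cbn [andb]; by_member.
  - destruct (derivable_mu_failures O f x y) as [pre [Hpre Hin]].
    { intros z Hz; destruct (Hfails z Hz) as [w [_ Hw]]; eauto. }
    apply derivable_by with (halt_fact (encode f) (pair x y) 0 :: pre) 0;
      [intros nd [<-|Hnd]; auto | intros; fact_ok_simpl].
    apply andb_true_iff; split; [by_member|].
    apply allb_spec; intros z Hz; destruct (Hin z Hz) as [w Hw].
    apply existsb_in with (halt_fact (encode f) (pair x z) (S w)); [right; auto|].
    rewrite fact_value_halt, Nat.eqb_refl; reflexivity.
Qed.

(** * The tree of a machine and an input *)

Lemma sdrop_0 q : sdrop q 0 = 0.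
Proof. unfold sdrop; induction q; simpl; [reflexivity | rewrite IHq; apply psnd_0]. Qed.

Lemma sdrop_cons q a l : sdrop (S q) (code_seq (a :: l)) = sdrop q (code_seq l).
Proof. unfold sdrop; rewrite Nat.iter_succ_r; unfold stail; simpl; rewrite psnd_pair; reflexivity. Qed.

Lemma sdrop_code_seq_defined q l : n2b (sdrop q (code_seq l)) = true <-> q < length l.
Proof.
  revert q; induction l as [|a l IH]; intros [|q]; rewrite ?sdrop_cons, ?IH; simpl;
    rewrite ?sdrop_0; simpl; split; intros; try discriminate; try lia; reflexivity.
Qed.

Lemma shead_sdrop_code_seq q l : shead (sdrop q (code_seq l)) = nth q l 0.
Proof.
  revert q; induction l as [|a l IH]; intros [|q]; rewrite ?sdrop_cons, ?IH; simpl;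
    rewrite ?sdrop_0; unfold shead; simpl; rewrite ?pfst_0, ?pfst_pair; reflexivity.
Qed.

Lemma length_restr f m : length (restr f m) = m.
Proof. unfold restr; rewrite length_map, length_seq; reflexivity. Qed.

Lemma nth_restr f m q : q < m -> nth q (restr f m) 0 = f q.
Proof.
  intro H; unfold restr; rewrite nth_indep with (d' := f 0) by (rewrite length_map, length_seq; auto).
  rewrite map_nth, seq_nth by auto; reflexivity.
Qed.

Lemma consistent_restr f m : consistent f (code_seq (restr f m)).
Proof.
  intros x H; apply sdrop_code_seq_defined in H; rewrite length_restr in H.
  rewrite shead_sdrop_code_seq, nth_restr; auto.
Qed.

Lemma lists_oracle_restr f m M : M <= m -> lists_oracle (code_seq (restr f m)) f M.
Proof.
  intros H q Hq; rewrite sdrop_code_seq_defined, shead_sdrop_code_seq, length_restr, nth_restr by lia.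
  split; auto; lia.
Qed.

Lemma length_le_code_seq l : length l <= code_seq l.
Proof. induction l; simpl; auto; pose proof (pair_ge_r a (code_seq l)); lia. Qed.

Lemma code_seq_app_le l t : code_seq l <= code_seq (l ++ t).
Proof. induction l; simpl; [lia|]; pose proof (pair_mono_r a _ _ IHl); lia. Qed.

Definition extends (s1 s2 : nat) : Prop :=
  forall x, n2b (sdrop x s1) = true ->
    n2b (sdrop x s2) = true /\ shead (sdrop x s2) = shead (sdrop x s1).

Lemma extends_app l t : extends (code_seq l) (code_seq (l ++ t)).
Proof.
  intros x H; apply sdrop_code_seq_defined in H.
  rewrite sdrop_code_seq_defined, !shead_sdrop_code_seq, length_app, app_nth1 by auto.
  split; auto; lia.
Qed.

Lemma fact_ok_extends mem s1 s2 nd :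
  extends s1 s2 -> fact_ok mem s1 nd = true -> fact_ok mem s2 nd = true.
Proof.
  intros Hext; unfold fact_ok; cbv zeta.
  repeat match goal with |- context [if ?b then _ else _] => destruct b end; auto; intro H.
  repeat rewrite andb_true_iff in *; destruct H as [[H1 H2] H3].
  destruct (Hext _ H2) as [E1 E2]; rewrite E1, E2; auto.
Qed.

Lemma certifies_extends s1 s2 e n d :
  extends s1 s2 -> certifies s1 e n d = true -> certifies s2 e n d = true.
Proof.
  intros Hext H; unfold certifies in *; apply andb_true_iff in H as [H1 H2].
  rewrite H2, andb_true_r; rewrite allb_spec in *; intros j Hj.
  apply fact_ok_extends with s1; [exact Hext | apply H1; exact Hj].
Qed.

Lemma uncertified_prefix e n l t :
  uncertified e n (code_seq (l ++ t)) = true -> uncertified e n (code_seq l) = true.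
Proof.
  unfold uncertified; intros H; apply negb_true_iff in H; apply negb_true_iff.
  apply not_true_is_false; intros E; apply exb_spec in E; destruct E as [d [Hd E]].
  enough (exb (certifies (code_seq (l ++ t)) e n) (S (code_seq (l ++ t))) = true) by congruence.
  apply exb_spec; exists d; split.
  - pose proof (code_seq_app_le l t); lia.
  - eapply certifies_extends; eauto; apply extends_app.
Qed.

Lemma halting_leaves_tree f c n v :
  eval f c n v -> exists m, uncertified (encode c) n (code_seq (restr f m)) = false.
Proof.
  intros Hev; destruct (derivable_halt f c n v Hev) as [l [M [Hl Hin]]].
  set (d := pair (length l) (encode_list l)); exists (max M d).
  unfold uncertified; apply negb_false_iff, exb_spec; exists d; split.
  - pose proof (length_le_code_seq (restr f (max M d))); rewrite length_restr in *; lia.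
  - apply certifies_complete with v; auto; apply Hl, lists_oracle_restr; lia.
Qed.

Lemma leaving_tree_halts f e n m :
  uncertified e n (code_seq (restr f m)) = false -> exists c v, encode c = e /\ eval f c n v.
Proof.
  unfold uncertified; intros H; apply negb_false_iff, exb_spec in H; destruct H as [d [_ H]].
  eapply certifies_sound; eauto; apply consistent_restr.
Qed.

Fixpoint quote (c : code) : prim :=
  match c with
  | cZero => Pair Zero Zero
  | cSucc => Pair (CONST 1) Zero
  | cId => Pair (CONST 2) Zero
  | cFst => Pair (CONST 3) Zero
  | cSnd => Pair (CONST 4) Zero
  | cOracle => Pair (CONST 5) Zero
  | cPair f g => Pair (CONST 6) (Pair (quote f) (quote g))
  | cComp f g => Pair (CONST 7) (Pair (quote f) (quote g))
  | cPrec f g => Pair (CONST 8) (Pair (quote f) (quote g))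
  | cMu f => Pair (CONST 9) (quote f)
  end.

Lemma den_quote c z : den (quote c) z = encode c.
Proof. induction c; simpl; rewrite ?den_CONST, ?IHc1, ?IHc2, ?IHc; reflexivity. Qed.

Fixpoint const_code (m : nat) : code :=
  match m with 0 => cZero | S m' => cComp cSucc (const_code m') end.

Lemma eval_const_code O m x : eval O (const_code m) x m.
Proof. induction m; simpl; [constructor | econstructor; eauto; constructor]. Qed.

Definition CONST_CODE A :=
  Comp (Rec (quote cZero) (Pair (CONST 7) (Pair (quote cSucc) (Comp Snd Snd)))) (Pair Zero A).

Lemma den_CONST_CODE A z : den (CONST_CODE A) z = encode (const_code (den A z)).
Proof.
  unfold CONST_CODE; cbn [den]; unpair_simpl.
  generalize (den A z) as m; induction m; cbn [primrec]; [apply den_quote|].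
  cbn [den]; rewrite den_CONST, den_quote; unpair_simpl; rewrite IHm; reflexivity.
Qed.

(* The s-m-n construction: [fix_first X a] computes [x |-> X (pair a x)]. *)
Definition fix_first (X : code) (a : nat) : code := cComp X (cPair (const_code a) cId).

Definition FIX_FIRST (X : code) (A : prim) : prim :=
  Pair (CONST 7) (Pair (quote X) (Pair (CONST 6) (Pair (CONST_CODE A) (quote cId)))).

Lemma den_FIX_FIRST X A z : den (FIX_FIRST X A) z = encode (fix_first X (den A z)).
Proof. unfold FIX_FIRST; cbn [den]; rewrite !den_CONST, !den_quote, den_CONST_CODE; reflexivity. Qed.

Lemma eval_fix_first O X a x v : eval O (fix_first X a) x v <-> eval O X (pair a x) v.
Proof.
  split; intro H.
  - inversion H as [| | | | | | |f g x0 y z Hg Hf| | |]; subst.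
    inversion Hg as [| | | | | |f' g' x1 a0 b Ha Hb| | | |]; subst.
    assert (a0 = a) as -> by (eapply eval_functional; [exact Ha | apply eval_const_code]).
    inversion Hb; subst; auto.
  - econstructor; [|exact H]; constructor; [apply eval_const_code | constructor].
Qed.

Lemma Phi_fix_first O X a x :
  (exists v, Phi O (encode (fix_first X a)) x v) <-> exists v, eval O X (pair a x) v.
Proof.
  split.
  - intros [v [c [Hc Hev]]]; apply encode_inj in Hc; subst; apply eval_fix_first in Hev; eauto.
  - intros [v Hev]; exists v, (fix_first X a); split; auto; apply eval_fix_first; auto.
Qed.

Definition cert_tree (e n : nat) (s : list nat) : Prop := uncertified e n (code_seq s) = true.

Definition tree_code (e n : nat) : nat := encode (fix_first (compile UNCERTIFIED) (pair e n)).

Lemma tree_code_index e n : tree_index (tree_code e n) (cert_tree e n).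
Proof.
  split; [intros s t; apply uncertified_prefix|].
  intros s; split; intro Hs;
    exists (fix_first (compile UNCERTIFIED) (pair e n)); split; auto;
    apply eval_fix_first, eval_compile_eq; rewrite den_UNCERTIFIED; unfold cert_tree in Hs.
  - rewrite Hs; reflexivity.
  - apply not_true_is_false in Hs; rewrite Hs; reflexivity.
Qed.

Lemma not_path_cert_tree g e n :
  ~ is_path g (cert_tree e n) <-> exists m, uncertified e n (code_seq (restr g m)) = false.
Proof.
  unfold is_path, cert_tree; split.
  - intros H; apply not_all_ex_not in H as [m Hm]; exists m; apply not_true_is_false; auto.
  - intros [m Hm] H; specialize (H m); congruence.
Qed.

Lemma Pi11_iff_well_founded e n : Pi11 e n <-> ~ ill_founded (cert_tree e n).
Proof.
  split.
  - intros HPi [f Hf]; destruct (HPi f) as [v [c [<- Hev]]].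
    apply (not_path_cert_tree f (encode c) n); auto; exact (halting_leaves_tree f c n v Hev).
  - intros Hwf f; assert (Hnp : ~ is_path f (cert_tree e n)) by (intro; apply Hwf; exists f; auto).
    apply not_path_cert_tree in Hnp as [m Hm].
    destruct (leaving_tree_halts f e n m Hm) as [c [v [Hc Hev]]]; exists v, c; auto.
Qed.

(** * Searching along the loquacious path *)

Definition loq_path (G : nat -> nat) (e n : nat) (j : nat) : nat := G (pair (tree_code e n) j).

(* [prefix_code c] maps [((e, n), m), y] to the string of path values at positions
   [m - y, ..., m - 1]; since [code_seq] conses, the string is built from its end. *)
Definition prefix_step (c : code) : code :=
  cComp cSucc
    (cPair (cComp c (cPair (compile (FIX_FIRST (compile UNCERTIFIED) (Comp Fst Fst)))
                           (compile (SUB (Comp Snd Fst) (SUCC (Comp Fst Snd))))))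
           (compile (Comp Snd Snd))).

Definition prefix_code (c : code) : code := cPrec cZero (prefix_step c).

Definition exit_test (c : code) : code :=
  cComp (compile UNCERTIFIED) (cPair (compile Fst) (cComp (prefix_code c) (cPair cId (compile Snd)))).

Definition exit_search (c : code) : code := cMu (exit_test c).

Section ExitSearch.

Variables (O : nat -> nat) (c : code) (G : nat -> nat).
Hypothesis eval_c : forall z, eval O c z (G z).

Lemma eval_prefix_code e n m y :
  y <= m ->
  eval O (prefix_code c) (pair (pair (pair e n) m) y)
    (code_seq (map (loq_path G e n) (seq (m - y) y))).
Proof.
  induction y; intro Hy; [constructor; constructor|].
  replace (seq (m - S y) (S y)) with ((m - S y) :: seq (m - y) y)
    by (simpl; f_equal; f_equal; lia).
  eapply evPrecS; [apply IHy; lia|].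
  eapply evComp; [|constructor]; constructor.
  - eapply evComp; [|apply eval_c]; constructor.
    + apply eval_compile_eq; rewrite den_FIX_FIRST; cbn [den]; unpair_simpl; reflexivity.
    + apply eval_compile_eq; rewrite den_SUB; cbn [den SUCC]; unpair_simpl; reflexivity.
  - apply eval_compile_eq; cbn [den]; unpair_simpl; reflexivity.
Qed.

Lemma eval_exit_test e n m :
  eval O (exit_test c) (pair (pair e n) m)
    (b2n (uncertified e n (code_seq (restr (loq_path G e n) m)))).
Proof.
  econstructor; [|apply eval_compile_eq, den_UNCERTIFIED]; constructor.
  - apply eval_compile_eq; cbn [den]; apply pfst_pair.
  - pose proof (eval_prefix_code e n m m (le_n m)) as Hp; rewrite Nat.sub_diag in Hp.
    econstructor; [|exact Hp].
    assert (Hm : eval O (compile Snd) (pair (pair e n) m) m)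
      by (apply eval_compile_eq; cbn [den]; apply psnd_pair).
    exact (evPair _ _ _ _ _ _ (evId _ _) Hm).
Qed.

Lemma exit_search_halts e n :
  (exists y, eval O (exit_search c) (pair e n) y) <->
  exists m, uncertified e n (code_seq (restr (loq_path G e n) m)) = false.
Proof.
  split.
  - intros [y Hy]; exists y; inversion Hy as [| | | | | | | | | |? ? ? Hzero _]; subst.
    pose proof (eval_functional _ _ _ _ Hzero _ (eval_exit_test e n y)) as E.
    destruct (uncertified _ _ _); simpl in E; congruence.
  - intros [m Hm].
    destruct (least_witness (fun m => negb (uncertified e n (code_seq (restr (loq_path G e n) m)))) m)
      as [y [Hy Hmin]]; [rewrite Hm; reflexivity|].
    exists y; constructor.
    + pose proof (eval_exit_test e n y) as H; apply negb_true_iff in Hy; rewrite Hy in H; exact H.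
    + intros z Hz; exists 0; pose proof (eval_exit_test e n z) as H.
      specialize (Hmin z Hz); apply negb_false_iff in Hmin; rewrite Hmin in H; exact H.
Qed.

End ExitSearch.

Lemma total_functional O i :
  (forall e n, exists v, Phi O i (pair e n) v) ->
  exists c G, encode c = i /\ forall z, eval O c z (G z).
Proof.
  intros Htot; destruct (Htot 0 0) as [v0 [c [Hc _]]].
  assert (Hev : forall z, exists v, eval O c z v).
  { intro z; destruct (Htot (pfst z) (psnd z)) as [v [c' [Hc' Hv]]].
    rewrite pair_pfst_psnd in Hv; assert (c' = c) as -> by (apply encode_inj; congruence); eauto. }
  destruct (functional_choice _ Hev) as [G HG]; eauto.
Qed.

Lemma ill_founded_iff_loquacious_path D i c G :
  (forall e T, tree_index e T -> ill_founded T ->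
     exists g, (forall n, Phi (chi D) i (pair e n) (g n)) /\ is_path g T) ->
  encode c = i -> (forall z, eval (chi D) c z (G z)) ->
  forall e T, tree_index e T -> ill_founded T <-> is_path (fun j => G (pair e j)) T.
Proof.
  intros Hpath Hc HG e T HT; split; [|intros H; exists (fun j => G (pair e j)); exact H].
  intros Hill; destruct (Hpath e T HT Hill) as [g [Hg Hgp]].
  intros m; replace (restr (fun j => G (pair e j)) m) with (restr g m); [apply Hgp|].
  apply map_ext; intros j; destruct (Hg j) as [c' [Hc' Hev]].
  assert (c' = c) as -> by (apply encode_inj; congruence).
  eapply eval_functional; eauto.
Qed.

Theorem mainTheorem4 (D : nat -> bool) :
  loquacious_for_paths D ->
  exists g : nat,
    forall e : nat, exists k : nat,
      phi g e k /\ (forall n : nat, Pi11 e n <-> W D k n).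
Proof.
  intros [i [Htot Hpath]].
  destruct (total_functional _ _ Htot) as [c [G [Hc HG]]].
  exists (encode (compile (FIX_FIRST (exit_search c) Id))); intro e.
  exists (encode (fix_first (exit_search c) e)); split.
  - exists (compile (FIX_FIRST (exit_search c) Id)); split; auto.
    apply eval_compile_eq; rewrite den_FIX_FIRST; reflexivity.
  - intro n; unfold W; rewrite Phi_fix_first, (exit_search_halts _ _ _ HG), Pi11_iff_well_founded.
    rewrite (ill_founded_iff_loquacious_path D i c G Hpath Hc HG _ _ (tree_code_index e n)).
    apply not_path_cert_tree.
Qed.
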